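(* Let $t \in \mathbb{N}_0$ and $b \in \mathbb{N}$ be such that $\Phi_b(x)$ divides \begin{align*} R_t(x) = {}& x^{8t+15} + x^{8t+14} + x^{8t+11} - x^{8t+10} - x^{8t+8} + 2x^{6t+9} - x^{4t+15} - x^{4t+11} - x^{4t+9} + 2x^{4t+8} \\ & - 2x^{4t+7} + x^{4t+6} + x^{4t+4} + x^{4t} - 2x^{2t+6} + x^7 + x^5 - x^4 - x - 1. \end{align*} Then $4 \nmid b$.
   Context: $\Phi_b(x) = \prod_\zeta (x-\zeta)$, where $\zeta$ ranges over the primitive $b$-th roots of unity, is the $b$-th cyclotomic polynomial. *)

From mathcomp Require Import all_boot all_order all_algebra all_field.
Set Implicit Arguments. Unset Strict Implicit. Unset Printing Implicit Defensive.
Import GRing.Theory.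
Local Open Scope ring_scope.

Definition Rpoly (t : nat) : {poly int} :=
  'X^(8*t+15) + 'X^(8*t+14) + 'X^(8*t+11) - 'X^(8*t+10) - 'X^(8*t+8)
  + 2%:P * 'X^(6*t+9) - 'X^(4*t+15) - 'X^(4*t+11) - 'X^(4*t+9)
  + 2%:P * 'X^(4*t+8) - 2%:P * 'X^(4*t+7) + 'X^(4*t+6) + 'X^(4*t+4)
  + 'X^(4*t) - 2%:P * 'X^(2*t+6) + 'X^7 + 'X^5 - 'X^4 - 'X - 1.

From mathcomp Require Import all_boot all_order all_algebra all_field.
From mathcomp Require Import ring zify.
Import GRing.Theory Num.Theory.
Local Open Scope ring_scope.

(* Suppose 4 | b and let z be a primitive b-th root of unity.  Then -z, z^-1
   and -z^-1 are primitive b-th roots too, hence roots of R_t.  Adding the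
   values at z and -z, resp. at z^-1 and -z^-1, gives two polynomial relations
   between u = z^(2t) and w = z^2; eliminating u shows that s = w + w^-1 is a
   root of an explicit polynomial Ptr of degree 17.
   Writing b = 4c, the primitive root z^(c+1) (c even), resp. z^(c+2) (c odd),
   replaces s by -s, resp. 2 - s^2, which would then be a common root of
   Ptr(x) and Ptr(-x), resp. Ptr(2 - x^2); Bezout identities with nonzero
   integer right-hand sides exclude both. *)

Local Notation pZtoC := (map_poly (intr : int -> algC)).

Lemma prim_expr_half {R : idomainType} {n} {z : R} :
  (n.*2).-primitive_root z -> z ^+ n = -1.
Proof.
move=> prim_z; have n_gt0 : (0 < n)%N by rewrite -double_gt0 (prim_order_gt0 prim_z).
have /eqP : (z ^+ n) ^+ 2 = 1 by rewrite -exprM muln2 prim_expr_order.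
rewrite sqrf_eq1 => /orP[|/eqP //]; rewrite -(prim_order_dvd prim_z) => /dvdn_leq.
by rewrite -addnn => /(_ n_gt0); lia.
Qed.

Lemma prim_rootV {F : fieldType} {n} {z : F} :
  n.-primitive_root z -> n.-primitive_root z^-1.
Proof.
move=> prim_z; have n_gt0 := prim_order_gt0 prim_z.
have z0 : z != 0 by rewrite (prim_root_eq0 prim_z) -lt0n.
have -> : z^-1 = z ^+ n.-1.
  by apply: (mulfI z0); rewrite mulfV // -exprS prednK // prim_expr_order.
by rewrite prim_root_exp_coprime // coprimePn.
Qed.

Lemma coprime_addn_mul4 c k : coprime (c + k) (c * 4) = coprime c k && odd (c + k).
Proof.
rewrite coprimeMr (_ : 4 = 2 ^ 2)%N // coprime_pexpr // coprimen2.
by rewrite coprime_sym /coprime gcdnDl.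
Qed.

Lemma prim_rootN {R : idomainType} {n} {z : R} :
  (4 %| n)%N -> n.-primitive_root z -> n.-primitive_root (- z).
Proof.
case/dvdnP=> c -> prim_z.
have zc : z ^+ c.*2 = -1 by apply: prim_expr_half; rewrite -!muln2 -mulnA.
have -> : - z = z ^+ (c + c.+1) by rewrite addnS addnn exprSr zc mulN1r.
by rewrite prim_root_exp_coprime // coprime_addn_mul4 coprimenS addnS addnn /= odd_double.
Qed.

Lemma dvd_Cyclotomic_root {n} {p : {poly int}} {z : algC} :
  'Phi_n %| p -> n.-primitive_root z -> root (pZtoC p) z.
Proof.
move=> /dvdpP_int[q ->] prim_z; rewrite zprimitive_monic ?Cyclotomic_monic //.
by rewrite rmorphM rootM /= (Cintr_Cyclotomic prim_z) root_cyclotomic prim_z.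
Qed.

Definition Rbiv (u y : algC) : algC :=
  u^+4 * (y^+15 + y^+14 + y^+11 - y^+10 - y^+8) + 2 * u^+3 * y^+9
  - u^+2 * (y^+15 + y^+11 + y^+9 - 2 * y^+8 + 2 * y^+7 - y^+6 - y^+4 - 1)
  - 2 * u * y^+6 + y^+7 + y^+5 - y^+4 - y - 1.

Lemma horner_Rpoly t (y : algC) : (pZtoC (Rpoly t)).[y] = Rbiv ((y ^+ 2) ^+ t) y.
Proof.
have exp_split k m : y ^+ (k * 2 * t + m) = ((y ^+ 2) ^+ t) ^+ k * y ^+ m.
  by rewrite exprD -!exprM; congr (y ^+ _ * _); lia.
have exp_split0 k : y ^+ (k * 2 * t) = ((y ^+ 2) ^+ t) ^+ k.
  by rewrite -!exprM; congr (y ^+ _); lia.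
rewrite /Rpoly !rmorphD !rmorphN !rmorphXn rmorph1 !rmorphM /=.
rewrite ?map_polyXn ?map_polyX ?rmorphD ?rmorph1 ?map_polyC !hornerE.
rewrite (exp_split 4%N 15%N) (exp_split 4%N 14%N) (exp_split 4%N 11%N).
rewrite (exp_split 4%N 10%N) (exp_split 4%N 8%N) (exp_split 3%N 9%N) (exp_split 2%N 15%N).
rewrite (exp_split 2%N 11%N) (exp_split 2%N 9%N) (exp_split 2%N 8%N) (exp_split 2%N 7%N).
rewrite (exp_split 2%N 6%N) (exp_split 2%N 4%N) (exp_split0 2%N) (exp_split 1%N 6%N).
by rewrite /Rbiv; ring.
Qed.

Definition Reven (u w : algC) : algC :=
  u^+4 * (w^+7 - w^+5 - w^+4) + u^+2 * (2 * w^+4 + w^+3 + w^+2 + 1)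
  - 2 * u * w^+3 - w^+2 - 1.

Lemma Rbiv_addN u y : Rbiv u y + Rbiv u (- y) = 2 * Reven u (y ^+ 2).
Proof. by rewrite /Rbiv /Reven; ring. Qed.

(* Eliminating u from [Reven u w] and [Reven u^-1 w^-1] leaves (w - 1)^2 times
   the palindromic polynomial w^17 Ptr (w + w^-1). *)
Definition Ptr (s : algC) : algC :=
  260 + 1088 * s + 992 * s^+2 - 472 * s^+3 - 10 * s^+4 + 181 * s^+5 - 1780 * s^+6 - 623 * s^+7
  + 1806 * s^+8 + 584 * s^+9 - 960 * s^+10 - 321 * s^+11 + 290 * s^+12 + 109 * s^+13
  - 42 * s^+14 - 18 * s^+15 + 2 * s^+16 + s^+17.

Lemma Reven_resultant (u w : algC) : u != 0 -> w != 0 -> w != 1 ->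
  Reven u w = 0 -> Reven u^-1 w^-1 = 0 -> Ptr (w + w^-1) = 0.
Proof.
move=> u0 w0 w1 Ruw Ruw'.
pose a : algC :=
    (2 * w^+9 - 10 * w^+11 - 24 * w^+12 - 14 * w^+13 - 6 * w^+14 + 10 * w^+15 + 4 * w^+16
     + 12 * w^+17 - 10 * w^+18 + 32 * w^+19 + 2 * w^+20 + 14 * w^+21 - 8 * w^+22 + 6 * w^+23
     + 20 * w^+24 + 28 * w^+25 + 28 * w^+26 - 10 * w^+27 - 2 * w^+28 - 20 * w^+29 - 14 * w^+30
     - 8 * w^+31 - 10 * w^+32 - 4 * w^+33 - 2 * w^+35) * u^+3 +
    (w^+5 - 3 * w^+7 - 3 * w^+8 - 8 * w^+9 - 40 * w^+10 - 66 * w^+11 - 21 * w^+12 + 31 * w^+13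
     + 36 * w^+14 - w^+15 + 24 * w^+16 + 47 * w^+17 + 84 * w^+18 + 21 * w^+19 - 40 * w^+20
     - 19 * w^+21 + 35 * w^+22 + 51 * w^+23 + 12 * w^+24 - 7 * w^+25 - 37 * w^+26 - 27 * w^+27
     - 17 * w^+28 - 17 * w^+29 - 3 * w^+30 + w^+31 - 3 * w^+32 + w^+34) * u^+2 +
    (2 * w^+4 - 8 * w^+6 - 20 * w^+7 - 12 * w^+8 + 4 * w^+9 + 22 * w^+10 - 10 * w^+11
     - 28 * w^+12 + 80 * w^+14 + 60 * w^+15 + 52 * w^+16 - 36 * w^+17 - 10 * w^+18 - 4 * w^+19
     + 34 * w^+20 - 26 * w^+21 - 58 * w^+22 - 68 * w^+23 - 76 * w^+24 - 18 * w^+25 - 4 * w^+26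
     + 18 * w^+27 + 22 * w^+28 + 32 * w^+29 + 14 * w^+30 + 12 * w^+31 + 12 * w^+32 + 4 * w^+33
     + 2 * w^+35) * u +
    (- 2 * w^+3 + 9 * w^+5 + 14 * w^+6 + 10 * w^+7 + 24 * w^+8 + 21 * w^+9 - 39 * w^+10
     - 78 * w^+11 - 9 * w^+12 + 54 * w^+13 + 42 * w^+14 - 91 * w^+15 - 87 * w^+16 + 3 * w^+17
     + 122 * w^+18 + 55 * w^+19 - 27 * w^+20 - 35 * w^+21 + 24 * w^+23 - 8 * w^+24 - 7 * w^+25
     - 4 * w^+26 + 8 * w^+27 - w^+29 - 2 * w^+30 - 2 * w^+31 - w^+32 - w^+34).
pose b : algC :=
    (- 2 * w^+8 - 2 * w^+9 + 12 * w^+10 + 38 * w^+11 + 26 * w^+12 - 28 * w^+13 - 54 * w^+14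
     + 32 * w^+16 + 8 * w^+17 - 50 * w^+18 - 30 * w^+19 + 24 * w^+20 + 56 * w^+21 - 20 * w^+22
     - 68 * w^+23 - 36 * w^+24 + 18 * w^+25 + 38 * w^+26 + 22 * w^+27 + 12 * w^+28 + 2 * w^+29
     + 8 * w^+30 - 4 * w^+31 - 8 * w^+32 - 2 * w^+35) * u^+3 +
    (- w^+4 - w^+5 + 4 * w^+6 + 12 * w^+7 + 11 * w^+8 + 9 * w^+9 + 16 * w^+10 + 18 * w^+11
     - 10 * w^+12 - 43 * w^+13 - 46 * w^+14 - 13 * w^+15 - 5 * w^+16 - 19 * w^+17 - 16 * w^+18
     + 37 * w^+19 + 47 * w^+20 + 8 * w^+21 - 37 * w^+22 - 18 * w^+23 + 31 * w^+24 + 37 * w^+25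
     + w^+26 - 24 * w^+27 - 8 * w^+28 + w^+29 + w^+30 - w^+32 + w^+34) * u^+2 +
    (2 * w^+4 - 8 * w^+6 - 18 * w^+7 - 10 * w^+8 - 14 * w^+9 + 2 * w^+10 + 18 * w^+11
     + 24 * w^+12 - 68 * w^+13 - 62 * w^+14 - 2 * w^+15 + 110 * w^+16 + 44 * w^+17 - 32 * w^+18
     - 60 * w^+19 + 42 * w^+20 + 122 * w^+21 + 68 * w^+22 + 16 * w^+23 - 14 * w^+24 - 2 * w^+25
     - 30 * w^+26 - 32 * w^+27 - 28 * w^+28 - 20 * w^+29 - 8 * w^+30 - 4 * w^+31 - 4 * w^+32) * u +
    (1 - 3 * w^+2 - 7 * w^+3 - 9 * w^+4 - 21 * w^+5 - 25 * w^+6 - 23 * w^+7 - 13 * w^+8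
     + 9 * w^+9 + 68 * w^+10 + 59 * w^+11 + 11 * w^+12 - 47 * w^+13 + 36 * w^+14 + 75 * w^+15
     + 100 * w^+16 - 81 * w^+17 - 104 * w^+18 - 27 * w^+19 + 66 * w^+20 + 37 * w^+21
     - 55 * w^+22 - 58 * w^+23 - 44 * w^+24 + 24 * w^+25 + 5 * w^+26 + 7 * w^+27 + 20 * w^+28
     + 7 * w^+29 + 2 * w^+30 + 6 * w^+31).
have res : a * Reven u w + b * (u ^+ 4 * w ^+ 7 * Reven u^-1 w^-1) =
    w ^+ 17 * (w - 1) ^+ 2 * Ptr (w + w^-1).
  by rewrite /a /b /Reven /Ptr; field; rewrite u0 w0.
move: res; rewrite Ruw Ruw' !mulr0 addr0 => /esym/eqP.
rewrite mulf_eq0 => /orP[|/eqP //].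
by rewrite mulf_eq0 !expf_eq0 (negbTE w0) subr_eq0 (negbTE w1).
Qed.

Lemma Ptr_root_opp_neq0 (s : algC) : Ptr s = 0 -> Ptr (- s) != 0.
Proof.
move=> Ps; apply/eqP => Pns.
pose a (v : algC) : algC := 256086914869743434629%:R + 38895631183494950220%:R * v
  + 65036723323482511673%:R * v^+2 - 108929530046898817673%:R * v^+3
  + 73431144409559204964%:R * v^+4 - 32537505967090411619%:R * v^+5
  + 6542272384652420081%:R * v^+6 - 402560280489687649%:R * v^+7.
pose b (v : algC) : algC := - 60777901741113483834%:R - 269152806323804906782%:R * v
  - 155305578510229213910%:R * v^+2 + 328655059888183918098%:R * v^+3
  - 232164326286956303214%:R * v^+4 + 89836476144466588360%:R * v^+5
  - 15499906452242966056%:R * v^+6 + 805120560979375298%:R * v^+7.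
(* a v * Pe v + b v * Po v = 456240771801822592148, where
   Ptr s = Pe (s^2) + s * Po (s^2). *)
have bezout : (s * a (s ^+ 2) + b (s ^+ 2)) * Ptr s + (s * a (s ^+ 2) - b (s ^+ 2)) * Ptr (- s)
    = 912481543603645184296%:R * s.
  by rewrite /a /b /Ptr; ring.
(* Opaque cofactors keep rewriting from unifying 0 with their huge numerals. *)
clearbody a b; move: bezout; rewrite Ps Pns !mulr0 addr0 => /esym/eqP.
rewrite mulf_eq0 => /orP[|/eqP s0]; first by rewrite pnatr_eq0.
have : Ptr 0 = 260 by rewrite /Ptr; ring.
by rewrite -s0 Ps => /eqP; rewrite eq_sym pnatr_eq0.
Qed.

Lemma Ptr_root_2_sub_sqr_neq0 (s : algC) : Ptr s = 0 -> Ptr (2 - s ^+ 2) != 0.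
Proof.
move=> Ps; apply/eqP => Pds.
pose a (x : algC) : algC :=
  1360434867234207143177782581495699065387791089417568658030427739530517%:R
  - 4672842130557403503733269488741641883684871613806568651654984619890572%:R * x
  + 199139324914888064327786766658594798753401757733489059051155602912028%:R * x^+2
  + 2625323808854152332432742309075582679526920461690497929671386023066248%:R * x^+3
  + 2997351447813205423110146645465498906411346850525833201214564622642783%:R * x^+4
  + 2669046418224550922449466943270343446076417422944429901292355781081077%:R * x^+5
  - 6645692871344701614958415219343232544303563452461145290717255406579983%:R * x^+6
  - 3875561386790803405884385237900019949506997818033396483465812680043966%:R * x^+7
  + 5311782594722528631378588279969221367576865721393270083970292040825024%:R * x^+8
  + 2378804802621733486786584529996786157415499480107173645920835859899788%:R * x^+9
  - 2466846863521131366084450314062955079085423207143936739611430143451531%:R * x^+10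
  - 762697788229388393778209843844115093103853468950839794117939753788906%:R * x^+11
  + 699942898735597463112738070858125874403917169575193713757013410101078%:R * x^+12
  + 107619263928026383300956256927165226945517990212009163274080395206487%:R * x^+13
  - 103118668563875481819173292494588955980729182147860530693725993877649%:R * x^+14
  - 4228556012710041998542680388695973509255544247067627735200657435319%:R * x^+15
  + 5566171080189234025027475138427340872249080375909238203507747066621%:R * x^+16.
pose b (x : algC) : algC :=
  2053866664522794604810283556184928444719003571755048129202075471463415%:R
  + 10065182970394521823390735171891887552636983639588039750936931075062308%:R * x
  + 78487574382162948854457297698811467352663533388400643768968354226278488%:R * x^+2
  + 220138888800105327221280352369301875267021027208498283435972819720039892%:R * x^+3
  - 69878638940510475844353941718817962139211201523475141280607161276860939%:R * x^+4
  - 125977248424186347497530194333637279750916271846824417554727407238105125%:R * x^+5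
  + 22966873295242181251725470027798524734095965868123818871818364580802659%:R * x^+6
  + 1287987444017725659949828408816651161574250467263948501582651466471818%:R * x^+7
  - 7264944958648974549999683732126384929109725015584073064280414963016188%:R * x^+8
  + 6584499199574546510668686850329617766924978381300584022433797608535576%:R * x^+9
  + 2143755922382239863879420961598430672234066749429858049715258606041775%:R * x^+10
  - 866088417761361493499251600720514893559409056510943624633059544371930%:R * x^+11
  - 900366120737219760468749404940302455906279794578652834241587596053162%:R * x^+12
  - 53398410688722516151694699835631903280611710669246462275451171286571%:R * x^+13
  + 175263181796063058225442173154642515899692291174137831009047317202309%:R * x^+14
  + 26493240333466978098652580942405336998251865750704580549231645701803%:R * x^+15
  - 5566171080189234025027475138427340872249080375909238203507747066621%:R * x^+16.
(* Ptr s * Ptr (- s) is even in s, hence a polynomial in s^2 - 2: working with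
   this Graeffe transform keeps the cofactors of degree 16. *)
have bezout : a (s ^+ 2 - 2) * (Ptr s * Ptr (- s)) + b (s ^+ 2 - 2) * Ptr (2 - s ^+ 2) =
    512238374900179282959829203304150210580736271225631415064052778747999628%:R.
  by rewrite /a /b /Ptr; ring.
clearbody a b; move: bezout; rewrite Ps Pds !(mul0r, mulr0) addr0 => /esym/eqP.
by rewrite pnatr_eq0.
Qed.

Section RootsOfRpoly.

Context {t b : nat}.
Hypotheses (dvd_R : 'Phi_b %| Rpoly t) (b4 : (4 %| b)%N).

Lemma Rbiv_prim_root {z} : b.-primitive_root z -> Rbiv ((z ^+ 2) ^+ t) z = 0.
Proof. by move=> /(dvd_Cyclotomic_root dvd_R) /eqP; rewrite horner_Rpoly. Qed.

Lemma Reven_prim_root {z} : b.-primitive_root z -> Reven ((z ^+ 2) ^+ t) (z ^+ 2) = 0.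
Proof.
move=> prim_z; have := Rbiv_addN ((z ^+ 2) ^+ t) z.
have := Rbiv_prim_root (prim_rootN b4 prim_z); rewrite sqrrN => ->.
rewrite Rbiv_prim_root // addr0 => /esym/eqP.
by rewrite mulf_eq0 pnatr_eq0 => /eqP.
Qed.

Lemma Ptr_prim_root {z} : b.-primitive_root z -> Ptr (z ^+ 2 + z ^- 2) = 0.
Proof.
move=> prim_z; have z0 : z != 0.
  by rewrite (prim_root_eq0 prim_z) -lt0n (prim_order_gt0 prim_z).
have Rz' := Reven_prim_root (prim_rootV prim_z); rewrite !exprVn in Rz'.
apply: (Reven_resultant _ _ _ _ _ (Reven_prim_root prim_z) Rz'); rewrite ?expf_neq0 //.
by rewrite -(prim_order_dvd prim_z); apply/negP => /(dvdn_trans b4).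
Qed.

End RootsOfRpoly.

Theorem mainTheorem6 (t b : nat) :
  (0 < b)%N -> 'Phi_b %| Rpoly t -> ~~ (4 %| b)%N.
Proof.
move=> b_gt0 dvd_R; apply/negP => b4; have [c def_b] := dvdnP b4.
have [z prim_z] := C_prim_root_exists b_gt0.
have z0 : z != 0 by rewrite (prim_root_eq0 prim_z) -lt0n.
have zc : z ^+ c.*2 = -1 by apply: prim_expr_half; rewrite -!muln2 -mulnA -def_b.
have Ptr_shift k : coprime c k -> odd (c + k) -> Ptr (- (z ^+ k.*2 + z ^- k.*2)) = 0.
  move=> ck odd_ck; have prim_zk : b.-primitive_root (z ^+ (c + k)).
    by rewrite prim_root_exp_coprime // def_b coprime_addn_mul4 ck.
  have := Ptr_prim_root dvd_R b4 prim_zk.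
  by rewrite -exprM mulnDl !muln2 exprD zc mulN1r invrN -opprD.
have Ptr_z := Ptr_prim_root dvd_R b4 prim_z.
have [c_odd | c_even] := boolP (odd c).
- have := Ptr_shift 2%N; rewrite coprimen2 oddD c_odd => /(_ isT isT).
  have -> : - (z ^+ 4 + z ^- 4) = 2 - (z ^+ 2 + z ^- 2) ^+ 2 by field.
  by apply/eqP; apply: Ptr_root_2_sub_sqr_neq0 Ptr_z.
- have := Ptr_shift 1%N; rewrite coprimen1 addn1 /= c_even => /(_ isT isT).
  by apply/eqP; apply: Ptr_root_opp_neq0 Ptr_z.
Qed.
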